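(* Let $N,q\in\mathbb Z$, $Q\in\mathbb Q$ and $i\in\mathbb Z$ with $i\le N$. Then $$z^i\equiv\sum_{k=1}^{N-q}\sum_{j=1}^{k}\binom{-Q}{-i+q+j}\binom{Q}{k-j}z^{q+k}\pmod{O(N,Q,q;z)}.$$
   Context: For $N,q\in\mathbb Z$ and $Q\in\mathbb Q$, $O(N,Q,q;z)$ is the subspace of $\mathbb C[z,z^{-1}]$ spanned by the monomials $z^i$ with $i\ge N+1$ together with the Laurent polynomials $\sum_{i=0}^{N-q-j}\binom Qi z^{i+q+j}$ for $j=0,-1,-2,\dots$ (equivalently $\mathrm{Res}_x\big((1+x)^Qx^{q+j}\sum_{i\le N}z^ix^{-i-1}\big)$). Binomial coefficients $\binom{c}{k}$ with $k<0$ are $0$; empty sums are $0$. *)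

From HB Require Import structures.
From mathcomp Require Import all_boot all_order all_algebra.
Unset Printing Implicit Defensive.
Import Order.TTheory GRing.Theory Num.Theory.
Local Open Scope ring_scope.

Definition binomQ (c : rat) (k : int) : rat :=
  match k with
  | Posz n => (\prod_(m < n) (c - m%:R)) / (n`!)%:R
  | Negz _ => 0
  end.

(* A Laurent polynomial over R is represented by its (finitely supported)
   coefficient function int -> R; z^i is [mono i]. *)
Definition mono (R : ringType) (i : int) : int -> R :=
  fun n => if n == i then 1 else 0.

(* The generator  sum_{i=0}^{N-q-j} binom(Q,i) z^(i+q+j)  of O(N,Q,q;z),
   as a coefficient function (coefficient of z^n is binom(Q, n-q-j) if
   q+j <= n <= N, and 0 otherwise). *)
Definition genO (R : unitRingType) (N : int) (Q : rat) (q j : int) : int -> R :=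
  fun n => if (q + j <= n) && (n <= N) then ratr (binomQ Q (n - q - j)) else 0.

(* Membership in the R-span O(N,Q,q;z) of the monomials z^i (i >= N+1) and
   the generators genO for j = 0,-1,-2,...: a finite linear combination. *)
Definition inO (R : unitRingType) (N : int) (Q : rat) (q : int) (p : int -> R) : Prop :=
  exists (m : nat) (a b : nat -> R), forall n : int,
    p n = \sum_(k < m) a k * genO R N Q q (- (k%:Z)) n
        + \sum_(k < m) b k * mono R (N + 1 + k%:Z) n.

Definition rhsT4 (R : unitRingType) (N : int) (Q : rat) (q i : int) : int -> R :=
  fun n => \sum_(0 <= k < `|N - q|%N.+1 | (1 <= k)%N && (k%:Z <= N - q))
             \sum_(1 <= j < k.+1)
               ratr (binomQ (- Q) (- i + q + j%:Z) * binomQ Q (k%:Z - j%:Z))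
               * mono R (q + k%:Z) n.

From HB Require Import structures.
From mathcomp Require Import all_boot all_order all_algebra ring zify.
Import Order.TTheory GRing.Theory Num.Theory.
Local Open Scope ring_scope.

(* Witness: the difference lies in the span of the generators genO(-k),
   k = 0..|q-i|, with coefficients C(-Q, q-i-k) (no monomial z^(N+1+k) is
   needed).  Comparing coefficients of z^n:
   - for n > N every term vanishes;
   - for n <= N, with u = q-i and d = n-q, the claim is the identity
       sum_k C(-Q,u-k) C(Q,d+k) + sum_{j=1}^{d} C(-Q,u+j) C(Q,d-j) = [d+u = 0],
     which is a window of the Chu-Vandermonde convolution
     sum_m C(-Q,m) C(Q,s-m) = C(-Q+Q,s) = C(0,s) with s = u+d. *)

Arguments binomQ : simpl never.

Lemma binomQ_neg (c : rat) (k : int) : k < 0 -> binomQ c k = 0.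
Proof. by case: k. Qed.

Lemma binomQ0 (c : rat) : binomQ c 0 = 1.
Proof. by rewrite /binomQ /= big_ord0 divr1. Qed.

(* The basic recurrence (k+1) C(c,k+1) = (c-k) C(c,k), equivalent to the
   product formula; it drives the Vandermonde identity. *)
Lemma binomQS (c : rat) (k : nat) :
  k.+1%:R * binomQ c k.+1 = (c - k%:R) * binomQ c k.
Proof.
rewrite /binomQ big_ord_recr /= factS natrM.
have k1_neq0 : k.+1%:R != 0 :> rat by rewrite pnatr_eq0.
have fact_neq0 : k`!%:R != 0 :> rat by rewrite pnatr_eq0 -lt0n fact_gt0.
by field; rewrite fact_neq0 /= addrC natr1.
Qed.

(* C(0,k) is the Kronecker delta at k = 0: the product contains the factor 0. *)
Lemma binom0Q (k : int) : binomQ 0 k = (k == 0)%:R.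
Proof.
case: k => [[|k]|k]; first by rewrite binomQ0.
  by rewrite /binomQ big_ord_recl subr0 !mul0r.
by rewrite binomQ_neg.
Qed.

Definition vconv (x y : rat) (s : nat) : rat :=
  \sum_(a < s.+1) binomQ x a * binomQ y (s - a)%N.

(* V satisfies the same recurrence as C(x+y,.): (s+1) V(s+1) = (x+y-s) V(s).
   Split s+1 = a + (s+1-a) and apply binomQS to each factor. *)
Lemma vconvS (x y : rat) (s : nat) :
  s.+1%:R * vconv x y s.+1 = (x + y - s%:R) * vconv x y s.
Proof.
rewrite /vconv mulr_sumr.
transitivity (\sum_(a < s.+2) ((a%:R * binomQ x a) * binomQ y (s.+1 - a)%N
   + binomQ x a * ((s.+1 - a)%N%:R * binomQ y (s.+1 - a)%N))).
  apply: eq_bigr => a _.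
  by rewrite -{1}(subnKC (leq_ord a : (a <= s.+1)%N)) natrD; ring.
rewrite big_split /= big_ord_recl [X in _ + X]big_ord_recr /=.
rewrite subnn !mul0r mulr0 add0r addr0 mulr_sumr -big_split /=.
apply: eq_bigr => a _; rewrite /bump /= add1n subSS binomQS.
rewrite subSn ?(leq_ord a) // binomQS natrB ?(leq_ord a) //; ring.
Qed.

Lemma vandermonde (x y : rat) (s : nat) : vconv x y s = binomQ (x + y) s.
Proof.
elim: s => [|s IHs].
  by rewrite /vconv big_ord1 !binomQ0 mulr1.
apply: (mulfI (_ : s.+1%:R != 0 :> rat)); first by rewrite pnatr_eq0.
by rewrite vconvS binomQS IHs.
Qed.

(* The convolution may be summed over any integer window [a, a+L) that
   contains [0, s]: outside it one of the two factors vanishes. *)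
Lemma vandermonde_window (x y : rat) (s a : int) (L : nat) :
  a <= 0 -> s < a + L%:Z ->
  \sum_(t < L) binomQ x (a + t%:Z) * binomQ y (s - (a + t%:Z)) = binomQ (x + y) s.
Proof.
move=> a_le0 s_lt; case: s s_lt => [s|s] s_lt; last first.
  rewrite binomQ_neg // big1 // => t _.
  have [at_lt0|at_ge0] := ltP (a + t%:Z) 0; first by rewrite binomQ_neg ?mul0r.
  by rewrite (binomQ_neg y) ?mulr0 //; lia.
have [p p_eq] : exists p : nat, p%:Z = - a by exists `|a|%N; lia.
have ps_le : (p + s.+1 <= L)%N by lia.
have p_le : (p <= L)%N by lia.
rewrite -(big_mkord xpredT (fun t : nat => binomQ x (a + t%:Z) * binomQ y (s%:Z - (a + t%:Z)))).
rewrite (big_cat_nat (leq0n p) p_le) (big_cat_nat (leq_addr s.+1 p) ps_le) /=.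
rewrite big1_seq ?add0r => [|t]; last first.
  by rewrite mem_index_iota => /andP [_ t_in]; rewrite binomQ_neg ?mul0r //; lia.
rewrite [X in _ + X]big1_seq ?addr0 => [|t]; last first.
  by rewrite mem_index_iota => /andP [_ t_in]; rewrite (binomQ_neg y) ?mulr0 //; lia.
rewrite -{1}[p]add0n big_addn addKn big_mkord -vandermonde.
by apply: eq_bigr => b _; congr (_ * _); congr binomQ; have := ltn_ord b; lia.
Qed.

(* Orthogonality of C(-Q,.) and C(Q,.) in the shape needed for the theorem:
   the first sum runs over m = u-k down to u-|u| <= 0, the second over
   m = u+1 .. u+|d|; together they form a window of sum_m C(-Q,m) C(Q,s-m)
   with s = u+d, whose value is C(0,s) = [s = 0]. *)
Lemma binomQ_inverse_conv (Q : rat) (u d : int) :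
  \sum_(k < `|u|%N.+1) binomQ (- Q) (u - k%:Z) * binomQ Q (d + k%:Z)
  + \sum_(j < `|d|%N) binomQ (- Q) (u + j.+1%:Z) * binomQ Q (d - j.+1%:Z)
  = (d + u == 0)%:R.
Proof.
have -> : (d + u == 0)%:R = binomQ (- Q + Q) (u + d).
  by rewrite addNr binom0Q addrC.
rewrite -(@vandermonde_window _ _ _ (u - `|u|%N%:Z) (`|u|%N.+1 + `|d|)); try lia.
rewrite big_split_ord /=; congr (_ + _).
  rewrite (reindex_inj rev_ord_inj); apply: eq_bigr => k _ /=.
  by congr (_ * _); congr binomQ; have := ltn_ord k; lia.
by apply: eq_bigr => j _; congr (_ * _); congr binomQ; lia.
Qed.

(* In a field of characteristic 0 the canonical map ratr : rat -> R is a ring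
   morphism (the library provides this only for numeric fields). *)
Section RatEmbedding.
Variable R : fieldType.
Hypothesis R_pchar0 : [pchar R] =i pred0.

Lemma pchar0_intr_eq0 (z : int) : (z%:~R == 0 :> R) = (z == 0).
Proof.
have natr_eq0 := (pcharf0P R).1 R_pchar0.
by case: z => n; rewrite ?NegzE ?mulrNz ?oppr_eq0 -pmulrn natr_eq0 ?oppr_eq0.
Qed.

(* ratr respects every fraction representation n/d, not just the reduced one:
   a common factor k of numerator and denominator is invertible in R. *)
Lemma ratr_frac (n d : int) : ratr (n%:~R / d%:~R) = n%:~R / d%:~R :> R.
Proof.
case: divqP => [_|k x k_neq0].
  by rewrite -[0]/(0%:~R : rat) ratr_int !(mul0r, invr0, mulr0).
have kR_neq0 : k%:~R != 0 :> R by rewrite pchar0_intr_eq0.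
by rewrite /ratr !intrM invfM mulrACA divff // mul1r.
Qed.

(* Additivity, from ratr_frac applied to x - y = (nx dy - ny dx)/(dx dy). *)
Lemma ratrB (x y : rat) : ratr (x - y) = ratr x - ratr y :> R.
Proof.
set nx := numq x; set dx := denq x; set ny := numq y; set dy := denq y.
have dxQ : dx%:~R != 0 :> rat by rewrite intq_eq0 denq_eq0.
have dyQ : dy%:~R != 0 :> rat by rewrite intq_eq0 denq_eq0.
have dxR : dx%:~R != 0 :> R by rewrite pchar0_intr_eq0 denq_eq0.
have dyR : dy%:~R != 0 :> R by rewrite pchar0_intr_eq0 denq_eq0.
have -> : x - y = (nx * dy - ny * dx)%:~R / (dx * dy)%:~R.
  rewrite -[x in LHS]divq_num_den -[y in LHS]divq_num_den !(intrB, intrM).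
  by field; rewrite dxQ dyQ.
rewrite ratr_frac /ratr -/nx -/dx -/ny -/dy !(intrB, intrM).
by field; rewrite dxR dyR.
Qed.

(* Multiplicativity, from ratr_frac applied to x y = (nx ny)/(dx dy). *)
Lemma ratrM (x y : rat) : ratr (x * y) = ratr x * ratr y :> R.
Proof.
rewrite -[x in LHS]divq_num_den -[y in LHS]divq_num_den mulf_div -!intrM.
by rewrite ratr_frac !intrM -mulf_div.
Qed.

Lemma ratr0 : ratr 0 = 0 :> R.
Proof. exact: (ratr_nat R 0). Qed.

Lemma ratr_sum (I : Type) (r : seq I) (P : pred I) (F : I -> rat) :
  ratr (\sum_(i <- r | P i) F i) = \sum_(i <- r | P i) ratr (F i) :> R.
Proof.
have ratrN x : ratr (- x) = - ratr x :> R by rewrite -sub0r ratrB ratr0 sub0r.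
have ratrD x y : ratr (x + y) = ratr x + ratr y :> R.
  by have := ratrB x (- y); rewrite opprK ratrN opprK.
exact: (big_morph _ ratrD ratr0).
Qed.

End RatEmbedding.

Arguments ratr0 {R}.
Arguments ratr_sum {R} R_pchar0 [I] r P F.
Arguments ratrB {R} R_pchar0 x y.
Arguments ratrM {R} R_pchar0 x y.

Lemma monoE (R : ringType) (i n : int) : mono R i n = (n == i)%:R.
Proof. by rewrite /mono; case: eqP. Qed.

Section Evaluation.
Variable R : fieldType.
Hypothesis R_pchar0 : [pchar R] =i pred0.
Variables (N q : int) (Q : rat).

Lemma genO_le (k : nat) (n : int) : n <= N ->
  genO R N Q q (- k%:Z) n = ratr (binomQ Q (n - q + k%:Z)).
Proof.
move=> n_le; rewrite /genO n_le andbT; case: ifP => [_|/negbT n_lt].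
  by congr ratr; congr binomQ; lia.
by rewrite binomQ_neg ?ratr0 //; lia.
Qed.

Lemma genO_gt (j n : int) : N < n -> genO R N Q q j n = 0.
Proof. by move=> N_lt; rewrite /genO (_ : (n <= N) = false) ?andbF //; lia. Qed.

(* Below the cut-off, only k = n-q contributes to the right-hand side. *)
Lemma rhsT4_le (i n : int) : n <= N ->
  rhsT4 R N Q q i n = ratr (\sum_(j < `|n - q|%N)
     binomQ (- Q) (q - i + j.+1%:Z) * binomQ Q (n - q - j.+1%:Z)).
Proof.
move=> n_le; rewrite /rhsT4.
have [d_gt0|d_le0] := ltrP 0 (n - q); last first.
  rewrite (ratr_sum R_pchar0) big1 => [|k /andP [k_ge1 _]]; last first.
    by rewrite big1 // => j _; rewrite monoE (_ : n == q + k%:Z = false) ?mulr0 //; lia.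
  by rewrite big1 // => j _; rewrite (binomQ_neg Q) ?mulr0 ?ratr0 //; lia.
rewrite big_mkord.
have d_lt : (`|n - q|%N < `|N - q|%N.+1)%N by lia.
rewrite (bigD1 (Ordinal d_lt)) /=; last by apply/andP; split; lia.
rewrite [X in _ + X]big1 ?addr0 => [|k /andP [_ /eqP k_neq]]; last first.
  rewrite big1 // => j _; rewrite monoE (_ : n == q + k%:Z = false) ?mulr0 //.
  by apply/negbTE/eqP => E; apply: k_neq; apply: val_inj => /=; lia.
rewrite (ratr_sum R_pchar0) big_add1 /= big_mkord; apply: eq_bigr => j _.
rewrite monoE (_ : n == q + `|n - q|%N%:Z) ?mulr1; last by apply/eqP; lia.
by congr ratr; congr (_ * _); congr binomQ; lia.
Qed.

Lemma rhsT4_gt (i n : int) : N < n -> rhsT4 R N Q q i n = 0.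
Proof.
move=> N_lt; rewrite /rhsT4 big1 // => k /andP [_ k_le].
by rewrite big1 // => j _; rewrite monoE (_ : n == q + k%:Z = false) ?mulr0 //; lia.
Qed.

End Evaluation.

Theorem mainTheorem4 (R : fieldType) (HR : [pchar R] =i pred0)
    (N q : int) (Q : rat) (i : int) (hi : i <= N) :
  inO R N Q q (fun n => mono R i n - rhsT4 R N Q q i n).
Proof.
exists `|q - i|%N.+1, (fun k => ratr (binomQ (- Q) (q - i - k%:Z))), (fun _ => 0).
move=> n; rewrite [X in _ = _ + X]big1 ?addr0 => [|k _]; last by rewrite mul0r.
have [n_le|N_lt] := lerP n N; last first.
  rewrite monoE rhsT4_gt // big1 => [|k _]; last by rewrite genO_gt ?mulr0.
  by rewrite (_ : n == i = false) ?subr0 //; lia.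
under eq_bigr => k _ do rewrite genO_le // -(ratrM HR).
rewrite -(ratr_sum HR) rhsT4_le // monoE.
have := binomQ_inverse_conv Q (q - i) (n - q).
rewrite (_ : (n - q + (q - i) == 0) = (n == i)); last by apply/eqP/eqP; lia.
move=> /(canRL (addrK _)) ->; rewrite (ratrB HR) ratr_nat.
by congr (_ - _); apply: eq_bigr => j _; congr ratr; congr (_ * _); congr binomQ; lia.
Qed.
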